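(* Let $X$ be a nonempty compact subset of $\mathbb{R}^n$, $\varphi:X\to\mathbb{R}$ upper semicontinuous, and $\psi:X\to\mathbb{R}$ Lipschitz continuous with constant $L_\psi$ with respect to a norm $\|\cdot\|$. For $\varepsilon\geq0$ let $F_\varepsilon=\{x\in X:\varphi(x)\geq\sup_{x'\in X}\varphi(x')-\varepsilon\}$ and $g(\varepsilon)=\sup_{x\in F_\varepsilon}d(x,F_0)$, where $d(x,F_0)=\inf_{y\in F_0}\|y-x\|$. Let $M=\sup_X\psi-\inf_X\psi$. Then for every $\delta\geq0$, \[ \Big|\sup_{x\in X}\big(\varphi(x)+\delta\psi(x)\big)-\Big[\sup_{x\in X}\varphi(x)+\delta\sup_{x\in\operatorname{arg\,max}\varphi}\psi(x)\Big]\Big|\leq L_\psi\,\delta\, g(\delta M). \]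
   Context: $\operatorname{arg\,max}\varphi=\{x\in X:\varphi(x)=\sup_X\varphi\}$. *)

From HB Require Import structures.
From mathcomp Require Import all_boot all_order all_algebra.
From mathcomp Require Import all_classical all_reals all_analysis.
Set Implicit Arguments. Unset Strict Implicit. Unset Printing Implicit Defensive.
Import Order.TTheory GRing.Theory Num.Theory.
Import numFieldNormedType.Exports.
Local Open Scope classical_set_scope.
Local Open Scope ring_scope.

(* A norm on R^n = 'rV[R]_n (arbitrary, not necessarily the library's). *)
Definition is_normR {R : realType} {n : nat} (N : 'rV[R]_n -> R) : Prop :=
  [/\ forall x, N x = 0 -> x = 0,
      forall (a : R) x, N (a *: x) = `|a| * N x
    & forall x y, N (x + y) <= N x + N y].

Definition usc_rel {R : realType} {n : nat} (X : set 'rV[R]_n)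
  (f : 'rV[R]_n -> R) : Prop :=
  forall x, X x -> forall e : R, 0 < e ->
    \forall y \near x, X y -> f y < f x + e.

Definition lip_wrt_norm {R : realType} {n : nat} (N : 'rV[R]_n -> R)
  (X : set 'rV[R]_n) (f : 'rV[R]_n -> R) (L : R) : Prop :=
  forall x y, X x -> X y -> `|f x - f y| <= L * N (x - y).

Definition supf {R : realType} {n : nat} (X : set 'rV[R]_n) (f : 'rV[R]_n -> R) : R :=
  sup (f @` X).
Definition inff {R : realType} {n : nat} (X : set 'rV[R]_n) (f : 'rV[R]_n -> R) : R :=
  inf (f @` X).

Definition argmaxR {R : realType} {n : nat} (X : set 'rV[R]_n) (phi : 'rV[R]_n -> R)
  : set 'rV[R]_n := [set x | X x /\ phi x = supf X phi].

Definition Feps {R : realType} {n : nat} (X : set 'rV[R]_n) (phi : 'rV[R]_n -> R)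
  (eps : R) : set 'rV[R]_n := [set x | X x /\ supf X phi - eps <= phi x].

Definition distNorm {R : realType} {n : nat} (N : 'rV[R]_n -> R)
  (A : set 'rV[R]_n) (x : 'rV[R]_n) : R := inf [set N (y - x) | y in A].

Definition gfun {R : realType} {n : nat} (N : 'rV[R]_n -> R) (X : set 'rV[R]_n)
  (phi : 'rV[R]_n -> R) (eps : R) : R :=
  sup [set distNorm N (Feps X phi 0) x | x in Feps X phi eps].

From HB Require Import structures.
From mathcomp Require Import all_boot all_order all_algebra.
From mathcomp Require Import all_classical all_reals all_analysis.
From mathcomp Require Import lra.
Set Implicit Arguments. Unset Strict Implicit. Unset Printing Implicit Defensive.
Import Order.TTheory GRing.Theory Num.Theory.
Import numFieldNormedType.Exports.
Local Open Scope classical_set_scope.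
Local Open Scope ring_scope.

(* Upper semicontinuity and compactness give a maximiser xm of phi, so
   sup phi = phi xm and arg max phi = F_0 is nonempty.  Evaluating
   phi + delta psi on F_0 gives the lower bound.  For the upper bound, a point
   x of X where phi + delta psi exceeds phi xm + delta sup_{F_0} psi lies in
   F_{delta M}, since psi x - sup_{F_0} psi <= M; and for every y in F_0 the
   excess is at most delta (psi x - psi y) <= L delta N (y - x), hence at most
   L delta d(x, F_0) <= L delta g(delta M).  All suprema involved are finite
   because every norm on R^n is dominated by a multiple of the max norm and X
   is bounded. *)

Section UpperSemicontinuousOnCompact.
Variables (R : realType) (T : topologicalType) (X : set T) (f : T -> R).
Hypotheses (cX : compact X)
  (f_usc : forall x, X x -> forall e : R, 0 < e ->
     \forall y \near x, X y -> f y < f x + e).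

Lemma compact_usc_ub : exists B, forall x, X x -> f x <= B.
Proof.
have [x Xx|M [_ fltM]] :=
  (compact_near_coveringP X).1 cX R (pinfty_nbhs R) (fun i y => X y -> f y < i).
  exists ([set y | X y -> f y < f x + 1], [set i | f x + 1 < i]).
    split => /=; first exact: f_usc.
    by apply: nbhs_pinfty_gt; rewrite num_real.
  by case=> y i /= [fy_lt lt_i] Xy; exact: lt_trans (fy_lt Xy) lt_i.
by exists (M + 1) => x Xx; apply/ltW/(fltM (M + 1)); rewrite ?ltrDl.
Qed.

Lemma compact_usc_attains_max :
  X !=set0 -> exists2 m, X m & forall x, X x -> f x <= f m.
Proof.
move=> X0; have [B fleB] := compact_usc_ub.
have supf : has_sup (f @` X).
  split; first by case: X0 => x Xx; exists (f x), x.
  by exists B => _ [x Xx <-]; exact: fleB.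
set S := sup (f @` X).
apply: contrapT => nomax.
have fltS x : X x -> f x < S.
  move=> Xx; rewrite ltNge; apply/negP => Sle; apply: nomax; exists x => // y Xy.
  by apply: le_trans Sle; apply: (sup_upper_bound supf); exists y.
(* If f < S everywhere, compactness yields a single e > 0 with f < S - e on X,
   contradicting S = sup f. *)
have [x Xx|r r0 cover] := (compact_near_coveringP X).1 cX R (at_right 0)
    (fun e y => X y -> f y < S - e).
  have gap0 : 0 < (S - f x) / 2 by rewrite divr_gt0 // subr_gt0 fltS.
  exists ([set y | X y -> f y < f x + (S - f x) / 2],
          [set e | e < (S - f x) / 2]).
    split => /=; first exact: f_usc.
    exists ((S - f x) / 2) => //= e; rewrite /ball /= sub0r normrN => e_lt _.
    exact: le_lt_trans (ler_norm _) e_lt.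
  by case=> y e /= [fy_lt e_lt] Xy; apply: lt_le_trans (fy_lt Xy) _; lra.
have r20 : 0 < r / 2 by rewrite divr_gt0.
have r2_near : ball_ Num.Def.normr 0 r (r / 2).
  by rewrite /ball_ /= sub0r normrN gtr0_norm //; lra.
have [_ [y Xy <-]] := sup_adherent r20 supf.
by have := cover _ r2_near r20 y Xy Xy; rewrite -/S; lra.
Qed.

End UpperSemicontinuousOnCompact.

Section SupOverSet.
Variables (R : realType) (n : nat) (X : set 'rV[R]_n) (f : 'rV[R]_n -> R).

Lemma supf_upper_bound B x :
  (forall y, X y -> f y <= B) -> X x -> f x <= supf X f.
Proof.
move=> fleB Xx; apply: sup_upper_bound; last by exists x.
by split; [exists (f x), x | exists B => _ [y Xy <-]; exact: fleB].
Qed.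

Lemma inff_lower_bound B x :
  (forall y, X y -> B <= f y) -> X x -> inff X f <= f x.
Proof.
move=> Blef Xx; apply: ge_inf; last by exists x.
by exists B => _ [y Xy <-]; exact: Blef.
Qed.

Lemma ge_supf c : X !=set0 -> (forall x, X x -> f x <= c) -> supf X f <= c.
Proof.
move=> [x Xx] flec; apply: ge_sup; first by exists (f x), x.
by move=> _ [y Xy <-]; exact: flec.
Qed.

Lemma mul_ge_supf (k c : R) : 0 <= k -> X !=set0 ->
  (forall x, X x -> k * f x <= c) -> k * supf X f <= c.
Proof.
move=> k0 X0 kflec; have [k_eq0|kn0] := eqVneq k 0.
  by case: X0 => x /kflec; rewrite k_eq0 !mul0r.
have kp : 0 < k by rewrite lt_def kn0 k0.
by rewrite -ler_pdivlMl //; apply: ge_supf => // x /kflec; rewrite ler_pdivlMl.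
Qed.

Lemma supf_max m : X m -> (forall x, X x -> f x <= f m) -> supf X f = f m.
Proof.
move=> Xm fle; apply/le_anti/andP; split.
  by apply: ge_supf => //; exists m.
exact: supf_upper_bound fle Xm.
Qed.

End SupOverSet.

Section NormOnRows.
Variables (R : realType) (n : nat) (N : 'rV[R]_n -> R).
Hypothesis N_norm : is_normR N.

Lemma normR0 : N 0 = 0.
Proof.
by case: N_norm => _ NZ _; have := NZ 0 0; rewrite scale0r normr0 mul0r.
Qed.

Lemma normRN x : N (- x) = N x.
Proof. by case: N_norm => _ NZ _; rewrite -scaleN1r NZ normrN1 mul1r. Qed.

Lemma normR_ge0 x : 0 <= N x.
Proof.
by case: N_norm => _ _ ND; have := ND x (- x); rewrite subrr normR0 normRN; lra.
Qed.

Lemma normR_distC x y : N (x - y) = N (y - x).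
Proof. by rewrite -normRN opprB. Qed.

Lemma normR_sum (I : Type) (r : seq I) (F : I -> 'rV[R]_n) :
  N (\sum_(i <- r) F i) <= \sum_(i <- r) N (F i).
Proof.
case: N_norm => _ _ ND; elim: r => [|i r IH]; first by rewrite !big_nil normR0.
by rewrite !big_cons; apply: le_trans (ND _ _) (lerD (lexx _) IH).
Qed.

Lemma normR_le_mx_norm : exists2 C, 0 <= C & forall x, N x <= C * `|x|.
Proof.
case: N_norm => _ NZ _.
have coord_le (x : 'rV[R]_n) i : `|x 0 i| <= `|x|.
  rewrite [leRHS]/Num.norm /= mx_normE -[leLHS]nngE num_le.
  exact: (le_bigmax _ (fun ij : 'I_1 * 'I_n => `|x ij.1 ij.2|%:nng) (0, i)).
exists (\sum_j N (delta_mx 0 j)) => [|x].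
  by apply: sumr_ge0 => j _; exact: normR_ge0.
rewrite [in leLHS](row_sum_delta x); apply: le_trans (normR_sum _ _) _.
rewrite mulr_suml; apply: ler_sum => j _; rewrite NZ mulrC.
by rewrite ler_wpM2l ?normR_ge0 ?coord_le.
Qed.

Lemma compact_normR_diam (X : set 'rV[R]_n) :
  compact X -> exists D, forall x y, X x -> X y -> N (x - y) <= D.
Proof.
move=> cX; have [C C0 NleC] := normR_le_mx_norm.
have [M [_ XleM]] := compact_bounded cX.
have Xle x : X x -> `|x| <= M + 1.
  by move=> Xx; apply: (XleM (M + 1)); rewrite ?ltrDl.
exists (C * ((M + 1) + (M + 1))) => x y Xx Xy.
apply: le_trans (NleC _) _; rewrite ler_wpM2l //.
by apply: le_trans (ler_normB _ _) _; exact: lerD (Xle _ Xx) (Xle _ Xy).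
Qed.

Lemma distNorm_le (A : set 'rV[R]_n) x y : A y -> distNorm N A x <= N (y - x).
Proof.
move=> Ay; apply: ge_inf; last by exists y.
by exists 0 => _ [z _ <-]; exact: normR_ge0.
Qed.

Lemma le_mul_distNorm (A : set 'rV[R]_n) x (k c : R) : 0 <= k -> A !=set0 ->
  (forall y, A y -> c <= k * N (y - x)) -> c <= k * distNorm N A x.
Proof.
move=> k0 [y0 Ay0] cle; have [k_eq0|kn0] := eqVneq k 0.
  by have := cle _ Ay0; rewrite k_eq0 !mul0r.
have kp : 0 < k by rewrite lt_def kn0 k0.
rewrite -ler_pdivrMl //; apply: lb_le_inf; first by exists (N (y0 - x)), y0.
by move=> _ [y Ay <-]; rewrite ler_pdivrMl // cle.
Qed.

Lemma distNorm_ge0 (A : set 'rV[R]_n) x : A !=set0 -> 0 <= distNorm N A x.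
Proof.
move=> A0; rewrite -[leRHS]mul1r.
by apply: le_mul_distNorm => // y _; rewrite mul1r normR_ge0.
Qed.

End NormOnRows.

Section PenalizedSup.
Variables (R : realType) (n : nat) (N : 'rV[R]_n -> R) (X : set 'rV[R]_n).
Variables (phi psi : 'rV[R]_n -> R) (L : R) (xm : 'rV[R]_n).
Hypotheses (N_norm : is_normR N) (cX : compact X).
Hypotheses (L0 : 0 <= L) (psi_lip : lip_wrt_norm N X psi L).
Hypotheses (Xxm : X xm) (xm_max : forall x, X x -> phi x <= phi xm).

Let F0 := argmaxR X phi.
Let supF0 := supf F0 psi.
Let osc := supf X psi - inff X psi.

Lemma supf_phi : supf X phi = phi xm.
Proof. exact: supf_max Xxm xm_max. Qed.

Lemma argmaxRP y : F0 y <-> X y /\ phi y = phi xm.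
Proof. by rewrite /F0 /argmaxR supf_phi. Qed.

Lemma argmaxR_xm : F0 xm.
Proof. exact/argmaxRP. Qed.

Lemma Feps0_argmaxR : Feps X phi 0 = F0.
Proof.
apply/seteqP; split => y [Xy phiy]; split => //.
  apply/le_anti/andP; split; first by rewrite supf_phi; exact: xm_max.
  by rewrite subr0 in phiy.
by rewrite phiy subr0.
Qed.

Lemma Feps_xm eps : 0 <= eps -> Feps X phi eps xm.
Proof. by move=> eps0; split=> //; rewrite supf_phi lerBlDr lerDl. Qed.

Lemma psi_bounded : exists B, forall x, X x -> `|psi x| <= B.
Proof.
have [D NleD] := compact_normR_diam N_norm cX.
exists (`|psi xm| + L * D) => x Xx.
rewrite -[psi x](subrK (psi xm)); apply: le_trans (ler_normD _ _) _.
rewrite addrC lerD2l; apply: le_trans (psi_lip Xx Xxm) _.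
by rewrite ler_wpM2l // NleD.
Qed.

Lemma psi_le_supf x : X x -> psi x <= supf X psi.
Proof.
have [B psiB] := psi_bounded.
by apply: (supf_upper_bound (B := B)) => y /psiB; exact: le_trans (ler_norm _).
Qed.

Lemma inff_le_psi x : X x -> inff X psi <= psi x.
Proof.
have [B psiB] := psi_bounded.
by apply: (inff_lower_bound (B := - B)) => y /psiB; rewrite ler_norml => /andP[].
Qed.

Lemma psi_le_supF0 y : F0 y -> psi y <= supF0.
Proof.
have [B psiB] := psi_bounded.
apply: (supf_upper_bound (B := B)) => z /argmaxRP[/psiB psiz _].
exact: le_trans (ler_norm _) psiz.
Qed.

Lemma osc_ge0 : 0 <= osc.
Proof.
by rewrite subr_ge0; apply: le_trans (inff_le_psi Xxm) (psi_le_supf Xxm).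
Qed.

Lemma penalized_sup_ge delta : 0 <= delta ->
  phi xm + delta * supF0 <= supf X (fun x => phi x + delta * psi x).
Proof.
move=> d0; have [B psiB] := psi_bounded.
have ub y : X y -> phi y + delta * psi y <= phi xm + delta * B.
  move=> Xy; rewrite lerD ?xm_max // ler_wpM2l //.
  exact: le_trans (ler_norm _) (psiB _ Xy).
rewrite addrC -lerBrDr; apply: mul_ge_supf => //.
  by exists xm; exact: argmaxR_xm.
move=> y /argmaxRP[Xy phiy]; rewrite lerBrDr addrC -phiy.
exact: supf_upper_bound ub Xy.
Qed.

Lemma dist_le_gfun eps x :
  Feps X phi eps x -> distNorm N F0 x <= gfun N X phi eps.
Proof.
have [D NleD] := compact_normR_diam N_norm cX.
rewrite /gfun Feps0_argmaxR => Fx; apply: sup_upper_bound; last by exists x.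
split; first by exists (distNorm N F0 x), x.
exists D => _ [y [Xy _] <-].
exact: le_trans (distNorm_le N_norm _ argmaxR_xm) (NleD _ _ Xxm Xy).
Qed.

Lemma gfun_ge0 eps : 0 <= eps -> 0 <= gfun N X phi eps.
Proof.
move=> eps0; apply: le_trans (dist_le_gfun (Feps_xm eps0)).
by apply: distNorm_ge0 => //; exists xm; exact: argmaxR_xm.
Qed.

Lemma penalized_excess_le_dist delta x : 0 <= delta -> X x ->
  phi x + delta * psi x - (phi xm + delta * supF0) <= L * delta * distNorm N F0 x.
Proof.
move=> d0 Xx; apply: le_mul_distNorm; first exact: mulr_ge0.
  by exists xm; exact: argmaxR_xm.
move=> y Fy; have [Xy _] := (argmaxRP y).1 Fy.
have psi_diff : psi x - psi y <= L * N (y - x).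
  by rewrite -(normR_distC N_norm); apply: le_trans (ler_norm _) (psi_lip Xx Xy).
have := xm_max Xx; have := ler_wpM2l d0 (psi_le_supF0 Fy).
have := ler_wpM2l d0 psi_diff; rewrite mulrBr mulrA [delta * L]mulrC; lra.
Qed.

Lemma penalized_le delta x : 0 <= delta -> X x ->
  phi x + delta * psi x
  <= phi xm + delta * supF0 + L * delta * gfun N X phi (delta * osc).
Proof.
move=> d0 Xx; have dM0 : 0 <= delta * osc by rewrite mulr_ge0 ?osc_ge0.
have [le_sum|gt_sum] := leP (phi x + delta * psi x) (phi xm + delta * supF0).
  by apply: le_trans le_sum _; rewrite lerDl !mulr_ge0 ?gfun_ge0.
have Fx : Feps X phi (delta * osc) x.
  split => //; rewrite supf_phi.
  have : psi x - supF0 <= osc.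
    apply: lerB; first exact: psi_le_supf.
    exact: le_trans (inff_le_psi Xxm) (psi_le_supF0 argmaxR_xm).
  by move/(ler_wpM2l d0); lra.
rewrite -lerBlDl; apply: le_trans (penalized_excess_le_dist d0 Xx) _.
by rewrite ler_wpM2l ?mulr_ge0 // dist_le_gfun.
Qed.

End PenalizedSup.

Theorem lemma5p12 (R : realType) (n : nat) (N : 'rV[R]_n -> R)
  (X : set 'rV[R]_n) (phi psi : 'rV[R]_n -> R) (Lpsi : R) :
  is_normR N ->
  X !=set0 -> compact X ->
  usc_rel X phi ->
  0 <= Lpsi -> lip_wrt_norm N X psi Lpsi ->
  forall delta : R, 0 <= delta ->
  `| supf X (fun x => phi x + delta * psi x)
     - (supf X phi + delta * supf (argmaxR X phi) psi) |
  <= Lpsi * delta * gfun N X phi (delta * (supf X psi - inff X psi)).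
Proof.
move=> N_norm X0 cX phi_usc L0 psi_lip delta d0.
have [xm Xxm xm_max] := compact_usc_attains_max cX phi_usc X0.
have lower := penalized_sup_ge N_norm cX L0 psi_lip Xxm xm_max d0.
have upper := penalized_le N_norm cX L0 psi_lip Xxm xm_max d0.
rewrite (supf_phi Xxm xm_max) ger0_norm ?subr_ge0 // lerBlDl.
by apply: ge_supf => //; exists xm.
Qed.
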